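(* Let $N\ge1$, $(T_N)_{jk}=\binom{j+k}{j}$, $(\Psi_N)_{jk}=\binom{j}{k}$ for $0\le j,k<N$, and $\Lambda_N=\mathrm{diag}(1,-1,\dots,(-1)^{N-1})$. If $\vec v$ is an eigenvector of $T_N$ with eigenvalue $\lambda$, then $\Psi_N\Lambda_N\vec v$ is an eigenvector of $T_N$ with eigenvalue $\lambda^{-1}$.
   Context: Matrix indices start at $0$. ($T_N=\Psi_N\Psi_N^\intercal$ is positive definite, so $\lambda\neq0$.) *)

From mathcomp Require Import all_boot all_order all_algebra.
Set Implicit Arguments. Unset Strict Implicit. Unset Printing Implicit Defensive.
Import GRing.Theory Num.Theory.
Local Open Scope ring_scope.

Definition Tmx (R : numFieldType) (N : nat) : 'M[R]_N :=
  \matrix_(j < N, k < N) ('C(j + k, j))%:R.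
Definition Psimx (R : numFieldType) (N : nat) : 'M[R]_N :=
  \matrix_(j < N, k < N) ('C(j, k))%:R.
Definition Lambdamx (R : numFieldType) (N : nat) : 'M[R]_N :=
  \matrix_(j < N, k < N) (if j == k then (-1) ^+ j else 0).

Definition is_eigenvector (R : numFieldType) (N : nat) (A : 'M[R]_N)
  (v : 'cV[R]_N) (lam : R) : Prop := v != 0 /\ A *m v = lam *: v.

From mathcomp Require Import all_boot all_order all_algebra.
Import GRing.Theory Num.Theory.

(* Put P := Psi Lambda.  Vandermonde's identity factors T = Psi Psi^T, and
   binomial inversion says that P is an involution.  Since Lambda^2 = 1 this
   gives P T = (P Lambda P) Psi^T = Lambda Psi^T = P^T, hence (P T)^2 = (P^2)^T = 1.
   Thus T v = lam v yields lam P T P v = v, and applying P: T (P v) = lam^-1 P v. *)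

Lemma sum_bin_mul_bin (a b n : nat) : a < n ->
  \sum_(k < n) 'C(a, k) * 'C(b, k) = 'C(a + b, a).
Proof.
move=> lt_a_n; rewrite -(subnKC lt_a_n) big_split_ord /=.
rewrite [X in _ + X]big1 ?addn0; last first.
  by move=> i _; rewrite bin_small ?mul0n //= ltnS leq_addr.
rewrite -binomial.Vandermonde [RHS](reindex_inj rev_ord_inj) /=.
apply: eq_bigr => i _; rewrite subSS.
by rewrite bin_sub ?subKn // -ltnS.
Qed.

Local Open Scope ring_scope.

Lemma sum_sign_bin_mul_bin (R : pzRingType) (i n j : nat) : (i < n)%N ->
  \sum_(k < n) (-1) ^+ k * 'C(i, k)%:R * 'C(k, j)%:R = (-1) ^+ j * (i == j)%:R :> R.
Proof.
elim: i n j => [|i IHi] [|n] j // lt_i_n.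
  rewrite big_ord_recl big1 => [|k _]; last by rewrite bin0n mulr0 mul0r.
  by rewrite addr0 expr0 !mul1r bin0n; case: j => [|j]; rewrite ?expr0 ?mul1r ?mulr0.
(* Pascal's rule 'C(i.+1, k.+1) = 'C(i, k.+1) + 'C(i, k) reduces i.+1 to i. *)
have -> : \sum_(k < n.+1) (-1) ^+ k * 'C(i.+1, k)%:R * 'C(k, j)%:R =
    \sum_(k < n.+1) (-1) ^+ k * 'C(i, k)%:R * 'C(k, j)%:R
    - \sum_(k < n) (-1) ^+ k * 'C(i, k)%:R * 'C(k.+1, j)%:R :> R.
  rewrite !big_ord_recl /= !bin0 addrAC -addrA; congr (_ + _).
  rewrite addrC -sumrN -big_split; apply: eq_bigr => k _.
  by rewrite /bump /= add1n binS natrD exprS mulN1r mulrDr mulrDl !mulNr addrC.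
rewrite IHi 1?ltnW //; case: j => [|j].
  by under eq_bigr => k _ do rewrite bin0 -(bin0 k); rewrite IHi // subrr mulr0.
under eq_bigr => k _ do rewrite binS natrD mulrDr.
rewrite big_split /= !IHi // opprD addrA subrr add0r exprS eqSS.
by rewrite mulN1r mulNr.
Qed.

Lemma is_eigenvector_inv_conj (R : numFieldType) (n : nat) (A P : 'M[R]_n)
    (v : 'cV[R]_n) (lam : R) :
  P *m P = 1%:M -> P *m A *m (P *m A) = 1%:M ->
  is_eigenvector A v lam -> is_eigenvector A (P *m v) lam^-1.
Proof.
move=> PP PA2 [v_neq0 Av].
have PPv : P *m (P *m v) = v by rewrite mulmxA PP mul1mx.
have Pv_neq0 : P *m v != 0.
  by apply: contraNneq v_neq0 => Pv0; rewrite -PPv Pv0 mulmx0.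
have lamAPv : lam *: (A *m (P *m v)) = P *m v.
  have := congr1 (mulmx P) (congr1 (mulmx^~ v) PA2).
  by rewrite mul1mx -!mulmxA Av -!scalemxAr !mulmxA PP !mul1mx.
have lam_neq0 : lam != 0.
  by apply: contraNneq Pv_neq0 => lam0; rewrite -lamAPv lam0 scale0r.
by split; rewrite // -{2}lamAPv scalerA mulVf ?scale1r.
Qed.

Section PsiLambda.
Variables (R : numFieldType) (N : nat).
Local Notation T := (Tmx R N).
Local Notation Psi := (Psimx R N).
Local Notation Lambda := (Lambdamx R N).

Lemma Tmx_Psimx : T = Psi *m Psi^T.
Proof.
apply/matrixP => i j; rewrite !mxE.
under eq_bigr => k _ do rewrite !mxE -natrM.
by rewrite -natr_sum sum_bin_mul_bin.
Qed.

Lemma trmx_Lambdamx : Lambda^T = Lambda.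
Proof. by apply/matrixP => i j; rewrite !mxE eq_sym; case: eqP => // ->. Qed.

Lemma Lambdamx_invol : Lambda *m Lambda = 1%:M.
Proof.
apply/matrixP => i j; rewrite !mxE (bigD1 i) //= big1 => [|l /negbTE ne_li].
  rewrite !mxE eqxx addr0; case: eqP => [->|_]; last by rewrite mulr0.
  by rewrite -expr2 -exprM mulnC exprM sqrrN !expr1n.
by rewrite !mxE eq_sym ne_li mul0r.
Qed.

Lemma mul_Psimx_Lambdamx_E i k :
  (Psi *m Lambda) i k = 'C(i, k)%:R * (-1) ^+ k.
Proof.
rewrite !mxE (bigD1 k) //= big1 ?addr0 => [|l /negbTE ne_lk]; first by rewrite !mxE eqxx.
by rewrite !mxE ne_lk mulr0.
Qed.

Lemma Psimx_Lambdamx_invol : Psi *m Lambda *m (Psi *m Lambda) = 1%:M.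
Proof.
apply/matrixP => i j; rewrite !mxE.
under eq_bigr => k _ do rewrite !mul_Psimx_Lambdamx_E mulrA [_ * (-1) ^+ k]mulrC.
rewrite -big_distrl /= sum_sign_bin_mul_bin // mulrAC -expr2 -exprM mulnC exprM.
by rewrite sqrrN !expr1n mul1r.
Qed.

Lemma mul_Psimx_Lambdamx_Tmx : Psi *m Lambda *m T = (Psi *m Lambda)^T.
Proof.
have PLPsi : Psi *m Lambda *m Psi = Lambda.
  rewrite -[RHS]mul1mx -Psimx_Lambdamx_invol -!mulmxA.
  by rewrite Lambdamx_invol mulmx1.
by rewrite Tmx_Psimx mulmxA PLPsi trmx_mul trmx_Lambdamx.
Qed.

End PsiLambda.

Theorem mainTheorem11 (R : realFieldType) (N : nat) (hN : (1 <= N)%N)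
  (v : 'cV[R]_N) (lam : R) :
  is_eigenvector (Tmx R N) v lam ->
  is_eigenvector (Tmx R N) (Psimx R N *m Lambdamx R N *m v) lam^-1.
Proof.
apply: is_eigenvector_inv_conj; first exact: Psimx_Lambdamx_invol.
by rewrite mul_Psimx_Lambdamx_Tmx -trmx_mul Psimx_Lambdamx_invol trmx1.
Qed.
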